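(* Let $Q=ABCD$ be a non-degenerate convex quadrangle of perimeter $2$ and $Q^\circ=KLMN$ its dual. Then $|AC|=|KM|$ and $|BD|=|LN|$; that is, duality preserves the lengths of the corresponding diagonals.
   Context: Identify $\mathbb{R}^2$ with $\mathbb{C}$. A quadrangle $Q=ABCD$ is an ordered 4-tuple of points $A,B,C,D\in\mathbb{C}$: $A$ is the first vertex and the order $A\to B\to C\to D\to A$ is the direction of traversal. Its edge vectors are $z_1=B-A$, $z_2=C-B$, $z_3=D-C$, $z_4=A-D$, so $z_1+z_2+z_3+z_4=0$; its perimeter is $|z_1|+|z_2|+|z_3|+|z_4|$. $Q$ is non-degenerate if each pair of consecutive edge vectors $(z_1,z_2),(z_2,z_3),(z_3,z_4),(z_4,z_1)$ consists of nonzero, non-collinear vectors. A non-degenerate quadrangle is convex if no two opposite edges intersect and all its interior angles are less than $\pi$. Associated plane: for a non-degenerate $Q$ of perimeter $2$, choose $u_1,\dots,u_4\in\mathbb{C}$ with $u_k^2=z_k$, where $u_1$ is an arbitrary square root of $z_1$ and for $k=1,2,3$ the sign of $u_{k+1}$ is chosen so that $\operatorname{Im}(\overline{u_k}u_{k+1})$ has the same sign as $\operatorname{Im}(\overline{z_k}z_{k+1})$. Write $u_k=a_k+i b_k$ and $\bar a=(a_1,a_2,a_3,a_4)$, $\bar b=(b_1,b_2,b_3,b_4)$; these are orthonormal in $\mathbb{R}^4$. Let $\Pi=\operatorname{span}(\bar a,\bar b)$ and $\Pi^\perp$ its orthogonal complement. Dual quadrangle: choose an orthonormal basis $(\bar c,\bar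 d)$ of $\Pi^\perp$, put $w_k=(c_k+i d_k)^2$; then $\sum_k w_k=0$ and $\sum_k|w_k|=2$. The dual quadrangle $Q^\circ=KLMN$ is the quadrangle with $L-K=w_1$, $M-L=w_2$, $N-M=w_3$, $K-N=w_4$. It is determined up to rotation, reflection and translation. *)

(* classical reals. C is identified with R*R. *)
From Stdlib Require Import Reals.
Open Scope R_scope.

Definition pt := (R * R)%type.

Definition psub (p q : pt) : pt := (fst p - fst q, snd p - snd q).

Definition cross (p q : pt) : R := fst p * snd q - snd p * fst q.

Definition cnorm (p : pt) : R := sqrt (fst p ^ 2 + snd p ^ 2).

Definition pdist (p q : pt) : R := cnorm (psub p q).

(* complex square: (a + i b)^2 *)
Definition csq (u : pt) : pt := (fst u ^ 2 - snd u ^ 2, 2 * fst u * snd u).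

Definition z1 (A B C D : pt) : pt := psub B A.
Definition z2 (A B C D : pt) : pt := psub C B.
Definition z3 (A B C D : pt) : pt := psub D C.
Definition z4 (A B C D : pt) : pt := psub A D.

Definition perimeter (A B C D : pt) : R :=
  cnorm (z1 A B C D) + cnorm (z2 A B C D) + cnorm (z3 A B C D) + cnorm (z4 A B C D).

Definition good_pair (p q : pt) : Prop :=
  p <> (0, 0) /\ q <> (0, 0) /\ cross p q <> 0.

Definition nondegenerate (A B C D : pt) : Prop :=
  good_pair (z1 A B C D) (z2 A B C D) /\ good_pair (z2 A B C D) (z3 A B C D) /\
  good_pair (z3 A B C D) (z4 A B C D) /\ good_pair (z4 A B C D) (z1 A B C D).

Definition segments_meet (P Q R0 S : pt) : Prop :=
  exists t s : R, 0 <= t <= 1 /\ 0 <= s <= 1 /\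
    fst P + t * (fst Q - fst P) = fst R0 + s * (fst S - fst R0) /\
    snd P + t * (snd Q - snd P) = snd R0 + s * (snd S - snd R0).

(* signed area (shoelace); its sign is the orientation of the traversal *)
Definition signed_area (A B C D : pt) : R :=
  (cross A B + cross B C + cross C D + cross D A) / 2.

(* For a simple polygon, the interior angle at a vertex is < pi iff the turn
   there is in the direction of the orientation of the polygon. *)
Definition interior_angles_lt_pi (A B C D : pt) : Prop :=
  let S := signed_area A B C D in
  cross (z4 A B C D) (z1 A B C D) * S > 0 /\
  cross (z1 A B C D) (z2 A B C D) * S > 0 /\
  cross (z2 A B C D) (z3 A B C D) * S > 0 /\
  cross (z3 A B C D) (z4 A B C D) * S > 0.

Definition convex (A B C D : pt) : Prop :=
  nondegenerate A B C D /\
  ~ segments_meet A B C D /\ ~ segments_meet B C D A /\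
  interior_angles_lt_pi A B C D.

Definition assoc_roots (A B C D u1 u2 u3 u4 : pt) : Prop :=
  csq u1 = z1 A B C D /\ csq u2 = z2 A B C D /\
  csq u3 = z3 A B C D /\ csq u4 = z4 A B C D /\
  cross u1 u2 * cross (z1 A B C D) (z2 A B C D) > 0 /\
  cross u2 u3 * cross (z2 A B C D) (z3 A B C D) > 0 /\
  cross u3 u4 * cross (z3 A B C D) (z4 A B C D) > 0.

Definition dot4 (f g : pt -> R) (p1 p2 p3 p4 q1 q2 q3 q4 : pt) : R :=
  f p1 * g q1 + f p2 * g q2 + f p3 * g q3 + f p4 * g q4.

(* v_k = (c_k, d_k): (c, d) orthonormal basis of the orthogonal complement of
   span(a, b), where u_k = (a_k, b_k).  *)
Definition perp_basis (u1 u2 u3 u4 v1 v2 v3 v4 : pt) : Prop :=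
  dot4 fst fst v1 v2 v3 v4 v1 v2 v3 v4 = 1 /\
  dot4 snd snd v1 v2 v3 v4 v1 v2 v3 v4 = 1 /\
  dot4 fst snd v1 v2 v3 v4 v1 v2 v3 v4 = 0 /\
  dot4 fst fst u1 u2 u3 u4 v1 v2 v3 v4 = 0 /\
  dot4 fst snd u1 u2 u3 u4 v1 v2 v3 v4 = 0 /\
  dot4 snd fst u1 u2 u3 u4 v1 v2 v3 v4 = 0 /\
  dot4 snd snd u1 u2 u3 u4 v1 v2 v3 v4 = 0.

Definition dual_quadrangle (A B C D K L M N : pt) : Prop :=
  exists u1 u2 u3 u4 v1 v2 v3 v4 : pt,
    assoc_roots A B C D u1 u2 u3 u4 /\
    perp_basis u1 u2 u3 u4 v1 v2 v3 v4 /\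
    psub L K = csq v1 /\ psub M L = csq v2 /\
    psub N M = csq v3 /\ psub K N = csq v4.

(* Write u_k = a_k + i b_k and v_k = c_k + i d_k for the square roots of the
   edge vectors of Q and of its dual.  Closing up (sum u_k^2 = 0) together with
   perimeter 2 (sum |u_k|^2 = 2) makes (a, b) orthonormal in R^4, so (a, b, c, d)
   are the columns of an orthogonal 4x4 matrix, whose rows are then orthonormal
   too: |u_k|^2 + |v_k|^2 = 1 and <u_j, u_k> + <v_j, v_k> = 0 for j <> k.  The
   diagonal AC is u_1^2 + u_2^2, and
   |p^2 + q^2|^2 = (|p|^2 - |q|^2)^2 + 4 <p, q>^2,
   which the row relations leave unchanged when (u_1, u_2) is replaced by
   (v_1, v_2). *)

From Stdlib Require Import Reals Lra.
From mathcomp Require Import all_boot all_algebra Rstruct.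
Import GRing.Theory.

Set Implicit Arguments.
Unset Strict Implicit.
Unset Printing Implicit Defensive.
Open Scope R_scope.

Definition dot (p q : pt) : R := fst p * fst q + snd p * snd q.

Lemma cnorm_csq (u : pt) : cnorm (csq u) = dot u u.
Proof.
case: u => a b; rewrite /cnorm /csq /dot; cbn [fst snd].
replace ((a ^ 2 - b ^ 2) ^ 2 + (2 * a * b) ^ 2) with ((a * a + b * b) ^ 2) by ring.
by apply: sqrt_pow2; nra.
Qed.

Lemma pdist_csq_steps (A B C p q : pt) :
  psub B A = csq p -> psub C B = csq q ->
  pdist A C = sqrt ((dot p p - dot q q) ^ 2 + 4 * dot p q ^ 2).
Proof.
case: A B C p q => [xA yA] [xB yB] [xC yC] [a b] [c d].
rewrite /pdist /psub /csq /cnorm /dot; cbn [fst snd] => -[ex1 ey1] [ex2 ey2].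
replace (xA - xC) with (- ((xB - xA) + (xC - xB))) by ring.
replace (yA - yC) with (- ((yB - yA) + (yC - yB))) by ring.
by rewrite ex1 ey1 ex2 ey2; congr sqrt; ring.
Qed.

Lemma dual_diagonal (A B C K L M p q p' q' : pt) :
  psub B A = csq p -> psub C B = csq q ->
  psub L K = csq p' -> psub M L = csq q' ->
  dot p p + dot p' p' = 1 -> dot q q + dot q' q' = 1 -> dot p q + dot p' q' = 0 ->
  pdist A C = pdist K M.
Proof.
move=> hp hq hp' hq' np nq pq.
rewrite (pdist_csq_steps hp hq) (pdist_csq_steps hp' hq').
replace (dot p' p') with (1 - dot p p) by lra.
replace (dot q' q') with (1 - dot q q) by lra.
replace (dot p' q') with (- dot p q) by lra.
by congr sqrt; ring.
Qed.

Lemma edge_roots_orthonormal (A B C D u1 u2 u3 u4 : pt) :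
  csq u1 = z1 A B C D -> csq u2 = z2 A B C D ->
  csq u3 = z3 A B C D -> csq u4 = z4 A B C D ->
  perimeter A B C D = 2 ->
  dot4 fst fst u1 u2 u3 u4 u1 u2 u3 u4 = 1 /\
  dot4 snd snd u1 u2 u3 u4 u1 u2 u3 u4 = 1 /\
  dot4 fst snd u1 u2 u3 u4 u1 u2 u3 u4 = 0.
Proof.
move=> e1 e2 e3 e4; rewrite /perimeter -e1 -e2 -e3 -e4 !cnorm_csq.
move: e1 e2 e3 e4; case: A B C D u1 u2 u3 u4
  => [xA yA] [xB yB] [xC yC] [xD yD] [a1 b1] [a2 b2] [a3 b3] [a4 b4].
rewrite /z1 /z2 /z3 /z4 /psub /csq /dot4 /dot; cbn [fst snd].
move=> [e1x e1y] [e2x e2y] [e3x e3y] [e4x e4y] per.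
have closed_re : a1 ^ 2 - b1 ^ 2 + (a2 ^ 2 - b2 ^ 2) + (a3 ^ 2 - b3 ^ 2) + (a4 ^ 2 - b4 ^ 2) = 0
  by lra.
have closed_im : 2 * a1 * b1 + 2 * a2 * b2 + 2 * a3 * b3 + 2 * a4 * b4 = 0 by lra.
by split; [|split]; nra.
Qed.

Section Frame.

Local Open Scope ring_scope.

Variables u1 u2 u3 u4 v1 v2 v3 v4 : pt.

Let row_pts : 'I_4 -> pt * pt :=
  nth (u1, v1) [:: (u1, v1); (u2, v2); (u3, v3); (u4, v4)].

(* Columns a, b, c, d: the k-th row is (u_k, v_k) flattened. *)
Definition frame : 'M[R]_4 :=
  \matrix_(i < 4, j < 4)
    nth 0 [:: (row_pts i).1.1; (row_pts i).1.2; (row_pts i).2.1; (row_pts i).2.2] j.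

Lemma frame_orthogonal :
  dot4 fst fst u1 u2 u3 u4 u1 u2 u3 u4 = 1 ->
  dot4 snd snd u1 u2 u3 u4 u1 u2 u3 u4 = 1 ->
  dot4 fst snd u1 u2 u3 u4 u1 u2 u3 u4 = 0 ->
  perp_basis u1 u2 u3 u4 v1 v2 v3 v4 ->
  frame^T *m frame = 1%:M.
Proof.
move=> haa hbb hab [hcc [hdd [hcd [hac [had [hbc hbd]]]]]].
have gram_sym : (frame^T *m frame)^T = frame^T *m frame by rewrite trmx_mul trmxK.
apply/matrixP => j k.
wlog le_jk : j k / (j <= k)%N.
  move=> hw; case: (leqP j k) => [/hw // | /ltnW /hw hkj].
  by rewrite -gram_sym -trmx1 [LHS]mxE [RHS]mxE.
rewrite !mxE !big_ord_recr big_ord0 /= !mxE /= add0r.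
by case: j le_jk => [[|[|[|[|//]]]] ?]; case: k => [[|[|[|[|//]]]] ?].
Qed.

Lemma frame_rows_orthonormal :
  dot4 fst fst u1 u2 u3 u4 u1 u2 u3 u4 = 1 ->
  dot4 snd snd u1 u2 u3 u4 u1 u2 u3 u4 = 1 ->
  dot4 fst snd u1 u2 u3 u4 u1 u2 u3 u4 = 0 ->
  perp_basis u1 u2 u3 u4 v1 v2 v3 v4 ->
  forall i j : 'I_4,
    dot (row_pts i).1 (row_pts j).1 + dot (row_pts i).2 (row_pts j).2 = (i == j)%:R.
Proof.
move=> haa hbb hab perp i j.
have := congr1 (fun X : 'M[R]_4 => X i j) (mulmx1C (frame_orthogonal haa hbb hab perp)).
rewrite /= [RHS]mxE => <-.
by rewrite mxE !big_ord_recr big_ord0 /= !mxE /= add0r /dot -!addrA.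
Qed.

End Frame.

Theorem theorem7p1 (A B C D K L M N : pt) :
  convex A B C D ->
  perimeter A B C D = 2 ->
  dual_quadrangle A B C D K L M N ->
  pdist A C = pdist K M /\ pdist B D = pdist L N.
Proof.
(* Convexity and the sign convention on the square roots are not needed. *)
move=> _ per [u1 [u2 [u3 [u4 [v1 [v2 [v3 [v4
  [[r1 [r2 [r3 [r4 _]]]] [perp [e1 [e2 [e3 _]]]]]]]]]]]]].
have [haa [hbb hab]] := edge_roots_orthonormal r1 r2 r3 r4 per.
have row := frame_rows_orthonormal haa hbb hab perp.
pose i0 := @Ordinal 4 0 isT; pose i1 := @Ordinal 4 1 isT; pose i2 := @Ordinal 4 2 isT.
split.
- exact (dual_diagonal (esym r1) (esym r2) e1 e2
    (row i0 i0) (row i1 i1) (row i0 i1)).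
- exact (dual_diagonal (esym r2) (esym r3) e2 e3
    (row i1 i1) (row i2 i2) (row i1 i2)).
Qed.
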